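(* Let $\mathrm{sol}^\star=(x^\star,y^\star,z^\star,\rho^\star,\lambda^\star,\mu^\star,\nu^\star,\eta^\star)$ be any optimizer of problem (P4) below, and assume that $\rho^{(l),\star}_e(t)\ge\epsilon(\beta)$ for all $e\in\mathcal E$, $t\in\mathcal T$, $l\in\mathcal L$. Then $\nu^{(l),\star}_e(t)\rho^{(l),\star}_e(t)\ge0$ for all $e,t,l$.
   Context: Data: integers $n,T,N\ge1$, $\mathcal E=\{1,\dots,n\}$, $\mathcal T=\{0,\dots,T-1\}$, $\mathcal L=\{1,\dots,N\}$, $\mathcal O=\{1,\dots,m\}$; speed-limit values $0<\gamma^{(1)}<\dots<\gamma^{(m)}$; for each $e$: $h_e>0$, $\bar\rho_e>0$, $\bar f_e>0$, $\bar u_e>0$ with $\bar u_e\bar\rho_e>\bar f_e$, $\tau_e=\bar f_e/(\bar u_e\bar\rho_e-\bar f_e)$; constants $\bar\eta>0$, $\epsilon(\beta)>0$; for each sample $l$ given data $\omega^{(l)}(t)\ge0$, initial densities $\rho^{(l)}_e(0)\ge0$, and $\kappa^{(l)}_e(t)=\frac{1-r^{o,(l)}_{e-1}(t)}{1-r^{in,(l)}_e(t)}$ with $r^{o,(l)},r^{in,(l)}\in[0,1)$. Problem (P4): maximize $-\lambda\epsilon(\beta)-\frac1N\sum_{e,t,l}\bar f_e\bar\rho_e\eta^{(l)}_e(t)+\frac1N\sum_{e,t,l}\nu^{(l)}_e(t)\rho^{(l)}_e(t)$ over $x_{e,i}(t),y^{(l)}_{e,i}(t),z^{(l)}_{e,i}(t),\rho^{(l)}_e(t),\lambda,\mu^{(l)}_e(t),\nu^{(l)}_e(t),\eta^{(l)}_e(t)$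 subject to, for all $e,i,t,l$: (speed limits) $x_{e,i}(t)\in\{0,1\}$, $\sum_{i}x_{e,i}(t)=1$, $\gamma^{(1)}\le\sum_i\gamma^{(i)}x_{e,i}(t)\le\gamma^{(m)}$; (linearization) $0\le z^{(l)}_{e,i}(t)\le\bar\eta x_{e,i}(t)$, $\eta^{(l)}_e(t)-\bar\eta(1-x_{e,i}(t))\le z^{(l)}_{e,i}(t)\le\eta^{(l)}_e(t)$, $0\le y^{(l)}_{e,i}(t)\le\bar\rho_ex_{e,i}(t)$, $\rho^{(l)}_e(t)-\bar\rho_e(1-x_{e,i}(t))\le y^{(l)}_{e,i}(t)\le\rho^{(l)}_e(t)$; (sample trajectories) $\rho^{(l)}_1(t+1)=\rho^{(l)}_1(t)+h_1\omega^{(l)}(t)-h_1\sum_i\gamma^{(i)}y^{(l)}_{1,i}(t)$; for $e\ge2$: $\rho^{(l)}_e(t+1)=\rho^{(l)}_e(t)+h_e\kappa^{(l)}_e(t)\sum_i\gamma^{(i)}y^{(l)}_{e-1,i}(t)-h_e\sum_i\gamma^{(i)}y^{(l)}_{e,i}(t)$ and $\kappa^{(l)}_e(t)\sum_i\gamma^{(i)}y^{(l)}_{e-1,i}(t)\le\min\{\bar f_e,\tau_e\bar u_e(\bar\rho_e-\rho^{(l)}_e(t))\}$; $\rho^{(l)}_e(0)$ equal to the given data; (dual constraints) $\sum_i\gamma^{(i)}(\bar\rho_e-\bar f_e/\bar u_e)z^{(l)}_{e,i}(t)-\mu^{(l)}_e(t)+\bar f_e\eta^{(l)}_e(t)\ge0$;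 $\nu^{(l)}_e(t)=\mu^{(l)}_e(t)+\frac1T\sum_i\gamma^{(i)}x_{e,i}(t)$; $\max_{e,t}|\nu^{(l)}_e(t)|\le\lambda$; $0\le\eta^{(l)}_e(t)\le\bar\eta$. *)

From mathcomp Require Import all_boot all_order all_algebra.
Set Implicit Arguments. Unset Strict Implicit. Unset Printing Implicit Defensive.
Import Order.TTheory GRing.Theory Num.Theory.
Local Open Scope ring_scope.

(* Indices follow the paper: edges e in {1..n}, times t in {0..T-1},
   samples l in {1..N}, speed-limit options i in {1..m}. *)
Record P4data (R : realFieldType) := {
  n : nat; T : nat; N : nat; m : nat;
  gamma : nat -> R;
  h : nat -> R; rhobar : nat -> R; fbar : nat -> R; ubar : nat -> R;
  etabar : R;
  eps : R;
  omega : nat -> nat -> R;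
  rho0 : nat -> nat -> R;
  rout : nat -> nat -> nat -> R;    (* r^{o,(l)}_e(t) : rout l e t *)
  rin : nat -> nat -> nat -> R      (* r^{in,(l)}_e(t) : rin l e t *)
}.

Section P4.
Variable R : realFieldType.
Variable D : P4data R.

Definition tau (e : nat) : R :=
  fbar D e / (ubar D e * rhobar D e - fbar D e).

Definition kappa (l e t : nat) : R :=
  (1 - rout D l e.-1 t) / (1 - rin D l e t).

Definition data_ok : Prop :=
  [/\ (1 <= n D)%N, (1 <= T D)%N, (1 <= N D)%N & (1 <= m D)%N] /\
  (0 < gamma D 1%N /\
   forall i, (1 <= i)%N -> (i < m D)%N -> gamma D i < gamma D i.+1) /\
  (forall e, (1 <= e <= n D)%N ->
     [/\ 0 < h D e, 0 < rhobar D e, 0 < fbar D e, 0 < ubar D e &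
         ubar D e * rhobar D e > fbar D e]) /\
  (0 < etabar D /\ 0 < eps D) /\
  (forall l t, (1 <= l <= N D)%N -> (t < T D)%N ->
     0 <= omega D l t /\
     forall e, (1 <= e <= n D)%N ->
       [/\ 0 <= rout D l e t, rout D l e t < 1,
           0 <= rin D l e t & rin D l e t < 1]) /\
  (forall l e, (1 <= l <= N D)%N -> (1 <= e <= n D)%N -> 0 <= rho0 D l e).

(* Decision variables of (P4). x e i t ; y l e i t ; z l e i t ;
   rho l e t (t in {0..T}) ; lambda ; mu l e t ; nu l e t ; eta l e t. *)
Record P4sol := {
  x : nat -> nat -> nat -> R;
  y : nat -> nat -> nat -> nat -> R;
  z : nat -> nat -> nat -> nat -> R;
  rho : nat -> nat -> nat -> R;
  lam : R;
  mu : nat -> nat -> nat -> R;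
  nu : nat -> nat -> nat -> R;
  eta : nat -> nat -> nat -> R
}.

Definition gsum (f : nat -> R) : R := \sum_(1 <= i < (m D).+1) gamma D i * f i.

Definition feasible (s : P4sol) : Prop :=
  (forall e t, (1 <= e <= n D)%N -> (t < T D)%N ->
     [/\ (forall i, (1 <= i <= m D)%N -> x s e i t = 0 \/ x s e i t = 1),
         \sum_(1 <= i < (m D).+1) x s e i t = 1 &
         gamma D 1%N <= gsum (fun i => x s e i t) <= gamma D (m D)]) /\
  (* linearization *)
  (forall l e i t, (1 <= l <= N D)%N -> (1 <= e <= n D)%N ->
     (1 <= i <= m D)%N -> (t < T D)%N ->
     [/\ 0 <= z s l e i t <= etabar D * x s e i t,
         eta s l e t - etabar D * (1 - x s e i t) <= z s l e i t <= eta s l e t,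
         0 <= y s l e i t <= rhobar D e * x s e i t &
         rho s l e t - rhobar D e * (1 - x s e i t) <= y s l e i t <= rho s l e t]) /\
  (forall l t, (1 <= l <= N D)%N -> (t < T D)%N ->
     rho s l 1%N t.+1 = rho s l 1%N t + h D 1%N * omega D l t
                        - h D 1%N * gsum (fun i => y s l 1%N i t)) /\
  (forall l e t, (1 <= l <= N D)%N -> (2 <= e <= n D)%N -> (t < T D)%N ->
     rho s l e t.+1 = rho s l e t
                      + h D e * kappa l e t * gsum (fun i => y s l e.-1 i t)
                      - h D e * gsum (fun i => y s l e i t)
     /\ kappa l e t * gsum (fun i => y s l e.-1 i t)
          <= Num.min (fbar D e) (tau e * ubar D e * (rhobar D e - rho s l e t))) /\
  (forall l e, (1 <= l <= N D)%N -> (1 <= e <= n D)%N -> rho s l e 0%N = rho0 D l e) /\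
  (forall l e t, (1 <= l <= N D)%N -> (1 <= e <= n D)%N -> (t < T D)%N ->
     [/\ 0 <= gsum (fun i => (rhobar D e - fbar D e / ubar D e) * z s l e i t)
              - mu s l e t + fbar D e * eta s l e t,
         nu s l e t = mu s l e t + (T D)%:R^-1 * gsum (fun i => x s e i t),
         `|nu s l e t| <= lam s &
         0 <= eta s l e t <= etabar D]).

Definition objective (s : P4sol) : R :=
  - lam s * eps D
  - (N D)%:R^-1 * \sum_(1 <= e < (n D).+1) \sum_(0 <= t < T D) \sum_(1 <= l < (N D).+1)
        fbar D e * rhobar D e * eta s l e t
  + (N D)%:R^-1 * \sum_(1 <= e < (n D).+1) \sum_(0 <= t < T D) \sum_(1 <= l < (N D).+1)
        nu s l e t * rho s l e t.

Definition optimizer (s : P4sol) : Prop :=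
  feasible s /\ forall s', feasible s' -> objective s' <= objective s.

End P4.

(** Replacing [nu] at a single point by [0] and [mu] there by [mu - nu] keeps
    every constraint of (P4): the new [mu] equals [- (1/T) sum_i gamma_i x_i],
    which is nonpositive, so the dual slack only grows, and [|0| <= |nu| <= lam].
    This changes the objective by exactly [- (1/N) nu rho] at that point, so
    optimality forces [nu rho >= 0]. *)

From mathcomp Require Import all_boot all_order all_algebra.
From mathcomp Require Import ring.
Set Implicit Arguments. Unset Strict Implicit. Unset Printing Implicit Defensive.
Import Order.TTheory GRing.Theory Num.Theory.
Local Open Scope ring_scope.

Lemma sum_nat_single (V : nmodType) (a b i0 : nat) (F : nat -> V) :
  (a <= i0 < b)%N -> (forall i, i != i0 -> F i = 0) ->
  \sum_(a <= i < b) F i = F i0.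
Proof.
move=> i0_in F0.
rewrite (bigD1_seq i0) ?mem_index_iota ?iota_uniq //=.
by rewrite big1 ?addr0 // => i; exact: F0.
Qed.

Lemma sum3_nat_single (V : nmodType) (a1 b1 a2 b2 a3 b3 i0 j0 k0 : nat)
    (F : nat -> nat -> nat -> V) :
  (a1 <= i0 < b1)%N -> (a2 <= j0 < b2)%N -> (a3 <= k0 < b3)%N ->
  (forall i j k, [|| i != i0, j != j0 | k != k0] -> F i j k = 0) ->
  \sum_(a1 <= i < b1) \sum_(a2 <= j < b2) \sum_(a3 <= k < b3) F i j k
    = F i0 j0 k0.
Proof.
move=> i0_in j0_in k0_in F0.
rewrite (sum_nat_single i0_in) => [|i ne_i]; last first.
  by rewrite !big1 // => j _; rewrite big1 // => k _; rewrite F0 ?ne_i.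
rewrite (sum_nat_single j0_in) => [|j ne_j]; last first.
  by rewrite big1 // => k _; rewrite F0 ?ne_j ?orbT.
by rewrite (sum_nat_single k0_in) // => k ne_k; rewrite F0 ?ne_k ?orbT.
Qed.

Section ZeroDualAtPoint.
Variables (R : realFieldType) (D : P4data R).
Hypothesis D_ok : data_ok D.

Lemma gamma_gt0 i : (1 <= i <= m D)%N -> 0 < gamma D i.
Proof.
have [_ [[gamma1_gt0 gamma_incr] _]] := D_ok.
elim: i => [|[|i] IHi] // /andP[_ i_lt].
apply: lt_trans (gamma_incr i.+1 isT i_lt).
by apply: IHi; rewrite /= ltnW.
Qed.

Lemma gsum_ge0 (f : nat -> R) :
  (forall i, (1 <= i <= m D)%N -> 0 <= f i) -> 0 <= gsum D f.
Proof.
move=> f_ge0; rewrite /gsum big_seq; apply: sumr_ge0 => i.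
rewrite mem_index_iota ltnS => i_in.
by rewrite mulr_ge0 ?f_ge0 ?ltW ?gamma_gt0.
Qed.

Definition zero_nu_at (s : P4sol R) (l0 e0 t0 : nat) : P4sol R :=
  Build_P4sol (x s) (y s) (z s) (rho s) (lam s)
    (fun l e t => if [&& l == l0, e == e0 & t == t0]
                  then mu s l e t - nu s l e t else mu s l e t)
    (fun l e t => if [&& l == l0, e == e0 & t == t0] then 0 else nu s l e t)
    (eta s).

Lemma feasible_zero_nu_at (s : P4sol R) l0 e0 t0 :
  feasible D s -> feasible D (zero_nu_at s l0 e0 t0).
Proof.
case=> speed [lin [? [? [? dual]]]].
do 5 (split; first by []).
move=> l e t l_in e_in t_in /=.
have [slack nu_def nu_le eta_in] := dual l e t l_in e_in t_in.
case: ifP => [/and3P[/eqP el /eqP ee /eqP et] | _]; last by [].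
subst l0 e0 t0; split=> //; last first.
- by rewrite normr0 (le_trans _ nu_le).
- by rewrite nu_def; ring.
have [_ _ /andP[gamma1_le _]] := speed e t e_in t_in.
have [[_ _ _ m_gt0] [_ [edge_ok _]]] := D_ok.
have [_ rhobar_gt0 fbar_gt0 ubar_gt0 ubar_rhobar] := edge_ok e e_in.
have gsum_x_ge0 : 0 <= gsum D (fun i => x s e i t).
  by apply: le_trans gamma1_le; apply/ltW/gamma_gt0; rewrite leqnn.
have gsum_z_ge0 :
    0 <= gsum D (fun i => (rhobar D e - fbar D e / ubar D e) * z s l e i t).
  apply: gsum_ge0 => i i_in.
  have [/andP[z_ge0 _] _ _ _] := lin l e i t l_in e_in i_in t_in.
  by rewrite mulr_ge0 // subr_ge0 ler_pdivrMr // mulrC ltW.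
have eta_term_ge0 : 0 <= fbar D e * eta s l e t.
  by case/andP: eta_in => eta_ge0 _; rewrite mulr_ge0 // ltW.
have T_inv_ge0 : 0 <= (T D)%:R^-1 :> R by rewrite invr_ge0 ler0n.
have -> : mu s l e t - nu s l e t = - ((T D)%:R^-1 * gsum D (fun i => x s e i t)).
  by rewrite nu_def; ring.
by rewrite opprK -addrA addr_ge0 // addr_ge0 // mulr_ge0.
Qed.

Lemma objective_zero_nu_at (s : P4sol R) l0 e0 t0 :
  (1 <= e0 <= n D)%N -> (t0 < T D)%N -> (1 <= l0 <= N D)%N ->
  objective D (zero_nu_at s l0 e0 t0)
    = objective D s - (N D)%:R^-1 * (nu s l0 e0 t0 * rho s l0 e0 t0).
Proof.
move=> e0_in t0_in l0_in.
set S := fun s' : P4sol R =>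
  \sum_(1 <= e < (n D).+1) \sum_(0 <= t < T D) \sum_(1 <= l < (N D).+1)
    nu s' l e t * rho s' l e t.
have S_diff : S s - S (zero_nu_at s l0 e0 t0) = nu s l0 e0 t0 * rho s l0 e0 t0.
  rewrite /S -sumrB; under eq_bigr => e _ do
    (rewrite -sumrB; under eq_bigr => t _ do rewrite -sumrB).
  rewrite (sum3_nat_single (i0 := e0) (j0 := t0) (k0 := l0)) ?ltnS //=.
    by rewrite !eqxx mul0r subr0.
  move=> e t l ne /=; case: ifP => [/and3P[/eqP el /eqP ee /eqP et] | _].
    by move: ne; rewrite el ee et !eqxx.
  by rewrite subrr.
rewrite -S_diff /objective /S; ring.
Qed.

End ZeroDualAtPoint.

Theorem proposition1 (R : realFieldType) (D : P4data R) (s : P4sol R) :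
  data_ok D ->
  optimizer D s ->
  (forall e t l, (1 <= e <= n D)%N -> (t < T D)%N -> (1 <= l <= N D)%N ->
     eps D <= rho s l e t) ->
  forall e t l, (1 <= e <= n D)%N -> (t < T D)%N -> (1 <= l <= N D)%N ->
     0 <= nu s l e t * rho s l e t.
Proof.
move=> D_ok [s_feas s_opt] _ e t l e_in t_in l_in.
have := s_opt _ (feasible_zero_nu_at D_ok l e t s_feas).
rewrite objective_zero_nu_at // gerDl oppr_le0 pmulr_rge0 // invr_gt0 ltr0n.
by case/andP: l_in; exact: leq_trans.
Qed.
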